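(* Let $M$ be a $3$-connected matroid and let $C^*$ be a $4$-element cocircuit of $M$. If there are distinct elements $c',c''\in C^*$ such that neither $c'$ nor $c''$ is in a triangle of $M$, then $M/c$ is $3$-connected for some $c\in C^*$. *)

From HB Require Import structures.
From mathcomp Require Import all_boot all_order.
Set Implicit Arguments. Unset Strict Implicit. Unset Printing Implicit Defensive.

Section Matroids.
Variable T : finType.

(* (E, r) is a matroid on ground set E with rank function r (values of r on
   sets not contained in E are irrelevant). *)
Definition is_matroid (E : {set T}) (r : {set T} -> nat) : Prop :=
  [/\ forall X : {set T}, X \subset E -> r X <= #|X|,
      forall X Y : {set T}, Y \subset E -> X \subset Y -> r X <= r Y &
      forall X Y : {set T}, X \subset E -> Y \subset E ->
        r (X :|: Y) + r (X :&: Y) <= r X + r Y].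

Definition circuit (E : {set T}) (r : {set T} -> nat) (C : {set T}) : Prop :=
  [/\ C \subset E, r C < #|C| &
      forall D : {set T}, D \proper C -> r D = #|D|].

Definition dual_rank (E : {set T}) (r : {set T} -> nat) (X : {set T}) : nat :=
  #|X| + r (E :\: X) - r E.

Definition cocircuit (E : {set T}) (r : {set T} -> nat) (C : {set T}) : Prop :=
  circuit E (dual_rank E r) C.

Definition triangle (E : {set T}) (r : {set T} -> nat) (C : {set T}) : Prop :=
  circuit E r C /\ #|C| = 3.

Definition k_separation (E : {set T}) (r : {set T} -> nat) (k : nat)
    (X : {set T}) : Prop :=
  [/\ X \subset E, k <= #|X|, k <= #|E :\: X| &
      r X + r (E :\: X) < k + r E].

Definition three_connected (E : {set T}) (r : {set T} -> nat) : Prop :=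
  forall (k : nat) (X : {set T}), k < 3 -> ~ k_separation E r k X.

Definition contract_ground (E : {set T}) (c : T) : {set T} := E :\ c.
Definition contract_rank (r : {set T} -> nat) (c : T) (X : {set T}) : nat :=
  r (X :|: [set c]) - r [set c].

End Matroids.

(* Suppose M / c' is not 3-connected. As c' lies in no triangle, a 1- or
   2-separation of M / c' yields a vertical separation for c': a 2-separation
   (X, Y) of M \ c' with |X|, |Y| >= 3 and c' spanned by both sides. Since
   E - C* is a hyperplane, neither side lies in it, so one side, say X, meets
   C* in a single element z. If z lies in no triangle, uncrossing any vertical
   separation for z against (X - z, Y + c') shows that M / z is 3-connected.
   Otherwise a triangle through z contains an element t of C* in Y that is
   spanned by X; moving t into X leaves a side meeting C* only in c'', and the
   same argument shows that M / c'' is 3-connected. *)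

From HB Require Import structures.
From mathcomp Require Import all_boot all_order.
From mathcomp Require Import zify.
From Stdlib Require Import Classical.
Set Implicit Arguments. Unset Strict Implicit. Unset Printing Implicit Defensive.

(* lia is very slow on contexts full of set facts, so card_lia drops them.
   set_eq and set_sub decide set identities and inclusions by pointwise case
   analysis; they too start from an empty context, so the facts they need must
   be moved into the goal. *)

Ltac clear_set_facts := repeat match goal with
  | h : is_true (_ \subset _) |- _ => clear h
  | h : is_true (_ \in _) |- _ => clear h
  | h : is_true (_ \notin _) |- _ => clear h
  | h : @eq {set _} _ _ |- _ => clear h
  | h : forall _, _ |- _ => clear h
  end.

Ltac card_lia := clear_set_facts; lia.

Ltac clear_point_facts := clear_set_facts; repeat match goal with
  | h : is_true (_ != _) |- _ => clear h
  | h : is_true (~~ _) |- _ => clear h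
  end.

Ltac revert_point_facts := repeat match goal with
  | h : is_true (_ \in _) |- _ => move: h
  | h : is_true (_ != _) |- _ => move: h
  | h : is_true (~~ _) |- _ => move: h
  end.

Ltac subst_point x := repeat match goal with
  | |- context [x == ?p] =>
      let h := fresh in case: (eqVneq x p) => [->|h]; [|rewrite ?(negbTE h)]
  end.

Ltac bool_cases := first [ by move=> /= | match goal with
  | |- context [?a \in ?A] => case: (a \in A); bool_cases
  | |- context [?a == ?b] =>
      let h := fresh in case h: (a == b); rewrite ?(eq_sym b a) ?h; bool_cases
  end ].

Ltac set_pointwise x :=
  repeat match goal with h : is_true (_ \subset _) |- _ =>
    move: (subsetP h x) => /implyP; clear h end;
  revert_point_facts; rewrite ?inE; subst_point x;
  revert_point_facts; rewrite ?inE ?eqxx; bool_cases.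

Ltac intro_premises := repeat (let h := fresh "h" in intro h).

Ltac set_eq := clear_point_facts; intro_premises;
  let x := fresh "x" in apply/setP => x; set_pointwise x.
Ltac set_sub := clear_point_facts; intro_premises;
  let x := fresh "x" in apply/subsetP => x; set_pointwise x.

Section Matroid.
Variables (T : finType) (E : {set T}) (r : {set T} -> nat).
Hypothesis matroid_r : is_matroid E r.

Lemma rank_le_card (X : {set T}) : X \subset E -> r X <= #|X|.
Proof. by case: matroid_r => h _ _; apply: h. Qed.

Lemma rank_mono (X Y : {set T}) : Y \subset E -> X \subset Y -> r X <= r Y.
Proof. by case: matroid_r => _ h _; apply: h. Qed.

Lemma rank_submod (X Y : {set T}) : X \subset E -> Y \subset E ->
  r (X :|: Y) + r (X :&: Y) <= r X + r Y.
Proof. by case: matroid_r => _ _ h; apply: h. Qed.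

Lemma rank_setU1 (X : {set T}) x : X \subset E -> x \in E -> r (x |: X) <= r X + 1.
Proof.
move=> sXE xE; have s1E : [set x] \subset E by rewrite sub1set.
have := rank_submod s1E sXE; have := rank_le_card s1E; rewrite cards1; card_lia.
Qed.

Definition in_closure (A : {set T}) x := r (x |: A) <= r A.

Lemma in_closureS (A B : {set T}) x : B \subset E -> x \in E -> A \subset B ->
  in_closure A x -> in_closure B x.
Proof.
move=> sBE xE sAB clAx; rewrite /in_closure.
have sxAE : x |: A \subset E by rewrite subUset sub1set xE (subset_trans sAB sBE).
have := rank_submod sBE sxAE; rewrite setUCA (setUidPl sAB).
have sAI : A \subset B :&: (x |: A) by rewrite subsetI sAB subsetUr.
have := rank_mono (subset_trans (subsetIl _ _) sBE) sAI.
move: clAx; rewrite /in_closure; card_lia.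
Qed.

Lemma setD_compl (A S : {set T}) : S \subset A -> A :\: (A :\: S) = S.
Proof. by move=> sSA; rewrite setDDr setDv set0U (setIidPr sSA). Qed.

Lemma card_compl_setD1 z (S : {set T}) : z \in E -> S \subset E :\ z ->
  #|S| + #|(E :\ z) :\: S| + 1 = #|E|.
Proof.
move=> zE sS; have := cardsID S (E :\ z); rewrite (setIidPr sS) => ->.
by rewrite (cardsD1 z E) zE addnC.
Qed.

Lemma card_setI_compl (U A B : {set T}) : B \subset U ->
  #|B :&: A| + #|B :&: (U :\: A)| = #|B|.
Proof.
move=> sBU; rewrite -(cardsID A B); congr (_ + _).
apply: eq_card => x; rewrite !inE.
by case: (boolP (x \in B)) => [/(subsetP sBU)->|]; rewrite ?andbF ?andbT.
Qed.

Lemma setU1_compl_setD1 z (S : {set T}) : z \in E -> S \subset E :\ z ->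
  z |: ((E :\ z) :\: S) = E :\: S.
Proof. by set_eq. Qed.

Lemma triangle_in_closure (Tr : {set T}) x : triangle E r Tr -> x \in Tr ->
  in_closure (Tr :\ x) x.
Proof.
move=> [[sTE rTr minTr] Tr3] xTr; rewrite /in_closure setD1K //.
rewrite (minTr (Tr :\ x)) ?properD1 //; have := cardsD1 x Tr; rewrite xTr /=; card_lia.
Qed.

Definition triangle_free x := forall Tr, triangle E r Tr -> x \notin Tr.

Lemma not_triangle_free x : ~ triangle_free x ->
  exists2 Tr, triangle E r Tr & x \in Tr.
Proof.
move=> xfree; have [Tr nTr] := not_all_ex_not _ _ xfree.
have [triTr xTr] := imply_to_and _ _ nTr.
by exists Tr; [exact: triTr | apply/negPn/negP].
Qed.

(* A 2-separation (S, E - z - S) of M \ z with z spanned by both sides; when z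
   lies in no triangle, this is what a 1- or 2-separation of M / z amounts to. *)
Definition vertical_sep z (S : {set T}) :=
  [/\ S \subset E :\ z, 3 <= #|S|, 3 <= #|(E :\ z) :\: S|,
      in_closure S z /\ in_closure ((E :\ z) :\: S) z &
      r S + r ((E :\ z) :\: S) <= r E + 2].

Lemma vertical_sepC z (S : {set T}) :
  vertical_sep z S -> vertical_sep z ((E :\ z) :\: S).
Proof.
case=> sS S3 Sc3 [clS clSc] sum; rewrite /vertical_sep setD_compl //.
by split=> //; [exact: subsetDl | rewrite addnC].
Qed.

Section Cocircuit.
Variable Cs : {set T}.
Hypothesis cocircuit_Cs : cocircuit E r Cs.

Lemma cocircuit_sub : Cs \subset E.
Proof. by case: cocircuit_Cs. Qed.

Lemma rank_compl_cocircuit : r (E :\: Cs) < r E.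
Proof. by case: cocircuit_Cs => _; rewrite /dual_rank; card_lia. Qed.

Lemma rank_setU1_compl_cocircuit x : x \in Cs -> r E <= r (x |: (E :\: Cs)).
Proof.
move=> xCs; have -> : x |: (E :\: Cs) = E :\: (Cs :\ x).
  by move: xCs cocircuit_sub; set_eq.
have [/cards0_eq->|Cx] := posnP #|Cs :\ x|; first by rewrite setD0.
case: cocircuit_Cs => _ _ /(_ _ (properD1 xCs)); rewrite /dual_rank; card_lia.
Qed.

Lemma cocircuit_not_in_closure (A : {set T}) x :
  A \subset E :\: Cs -> x \in Cs -> ~ in_closure A x.
Proof.
move=> sA xCs clAx; have xE := subsetP cocircuit_sub x xCs.
have := in_closureS (subsetDl E Cs) xE sA clAx.
rewrite /in_closure; have := rank_setU1_compl_cocircuit xCs.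
have := rank_compl_cocircuit; card_lia.
Qed.

Lemma vertical_sep_cocircuit_side (S : {set T}) e :
  #|Cs| = 4 -> e \in Cs -> vertical_sep e S ->
  exists X z, vertical_sep e X /\ X :&: Cs = [set z].
Proof.
move=> Cs4 eCs sepS; have sepSc := vertical_sepC sepS.
have [sS _ _ [clS clSc] _] := sepS.
set Sc := (E :\ e) :\: S in sepSc clSc.
have sScS : Sc \subset E :\ e by exact: subsetDl.
have sCe : Cs :\ e \subset E :\ e by exact: setSD cocircuit_sub.
have meet (A : {set T}) : A \subset E :\ e -> in_closure A e -> 0 < #|A :&: Cs|.
  move=> sA clA; rewrite card_gt0; apply: contraT => /negPn/eqP noCs.
  have sAH : A \subset E :\: Cs.
    apply/subsetP => x xA; rewrite inE (subsetP (subset_trans sA (subD1set E e)) x xA).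
    by rewrite andbT; apply/negP => xCs; move/setP/(_ x): noCs; rewrite !inE xA xCs.
  by case: (cocircuit_not_in_closure sAH eCs clA).
have Cse (A : {set T}) : A \subset E :\ e -> (Cs :\ e) :&: A = A :&: Cs.
  by move: eCs; set_eq.
have := card_setI_compl S sCe; rewrite -/Sc Cse // Cse //.
have := meet S sS clS; have := meet Sc sScS clSc.
rewrite (cardsD1 e Cs) eCs in Cs4.
have [/eqP/cards1P [z Sz] | S1] := eqVneq #|S :&: Cs| 1; first by exists S, z.
move=> ScCs SCs cSSc; have /cards1P [z Scz] : #|Sc :&: Cs| == 1 by card_lia.
by exists Sc, z.
Qed.

End Cocircuit.

Section ThreeConnected.
Hypothesis three_conn : three_connected E r.

Lemma three_connected_lambda k (A : {set T}) : k < 3 -> A \subset E ->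
  k <= #|A| -> k <= #|E :\: A| -> k + r E <= r A + r (E :\: A).
Proof.
move=> k3 sAE kA kAc; rewrite leqNgt; apply/negP => lt.
exact: three_conn k3 (And4 sAE kA kAc lt).
Qed.

Lemma contract_separation_closure z (S : {set T}) : z \in E ->
  S \subset E :\ z -> 2 <= #|S| -> 2 <= #|(E :\ z) :\: S| ->
  r (z |: S) + r (z |: ((E :\ z) :\: S)) <= r E + 2 -> in_closure S z.
Proof.
move=> zE sS S2 Sc2 sum.
have sSE : S \subset E := subset_trans sS (subD1set E z).
have := three_connected_lambda (k := 2) isT sSE S2.
rewrite -(setU1_compl_setD1 zE sS) cardsU1 !inE eqxx /= => /(_ ltac:(card_lia)).
rewrite /in_closure; card_lia.
Qed.

(* Uncrossing: submodularity on the pairs (z + S, z + P) and (z + Sc, z + Pc)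
   bounds the connectivity of the corners S :&: P and Sc :&: Pc, and both
   corners have connectivity at least 2. *)
Lemma crossing_separations z (S P : {set T}) : z \in E ->
  S \subset E :\ z -> P \subset E :\ z ->
  let Sc := (E :\ z) :\: S in let Pc := (E :\ z) :\: P in
  r (z |: S) + r (z |: Sc) <= r E + 2 -> r (z |: P) + r (z |: Pc) <= r E + 3 ->
  ~ in_closure (S :&: P) z -> ~ in_closure (Sc :&: Pc) z ->
  2 <= #|S :&: P| -> 2 <= #|Sc :&: Pc| -> False.
Proof.
move=> zE sS sP Sc Pc sumS sumP cla cld a2 d2.
have sE (A : {set T}) : A \subset E :\ z -> z |: A \subset E.
  by move=> sA; rewrite subUset sub1set zE (subset_trans sA (subD1set E z)).
have sScS : Sc \subset E :\ z by exact: subsetDl.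
have sPcS : Pc \subset E :\ z by exact: subsetDl.
have saE : S :&: P \subset E by move: sS; set_sub.
have sdE : Sc :&: Pc \subset E by set_sub.
have := rank_submod (sE _ sS) (sE _ sP).
have -> : (z |: S) :|: (z |: P) = E :\: (Sc :&: Pc).
  by rewrite /Sc /Pc; move: zE sS sP; set_eq.
have -> : (z |: S) :&: (z |: P) = z |: (S :&: P) by set_eq.
have := rank_submod (sE _ sScS) (sE _ sPcS).
have -> : (z |: Sc) :|: (z |: Pc) = E :\: (S :&: P).
  by rewrite /Sc /Pc; move: zE sS sP; set_eq.
have -> : (z |: Sc) :&: (z |: Pc) = z |: (Sc :&: Pc) by set_eq.
have sdEa : Sc :&: Pc \subset E :\: (S :&: P) by rewrite /Sc /Pc; set_sub.
have saEd : S :&: P \subset E :\: (Sc :&: Pc) by rewrite /Sc /Pc; move: sS; set_sub.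
have := three_connected_lambda (k := 2) isT saE a2
  (leq_trans d2 (subset_leq_card sdEa)).
have := three_connected_lambda (k := 2) isT sdE d2
  (leq_trans a2 (subset_leq_card saEd)).
move: cla cld; rewrite /in_closure; card_lia.
Qed.

Hypothesis card_E : 4 <= #|E|.

Lemma rank_small (D : {set T}) : D \subset E -> #|D| <= 2 -> r D = #|D|.
Proof.
move=> sDE D2; apply/eqP; rewrite eqn_leq rank_le_card //=.
have := three_connected_lambda (k := #|D|) (D2 : #|D| < 3) sDE (leqnn _).
rewrite cardsDS // => /(_ ltac:(card_lia)).
have := rank_mono (subxx E) (subsetDl E D); card_lia.
Qed.

Lemma rank_set1 x : x \in E -> r [set x] = 1.
Proof. by move=> xE; rewrite rank_small ?cards1 // sub1set. Qed.

Lemma triangle_free_rank x (Tr : {set T}) : triangle_free x ->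
  Tr \subset E -> #|Tr| = 3 -> x \in Tr -> 3 <= r Tr.
Proof.
move=> xfree sTE Tr3 xTr; rewrite leqNgt; apply/negP => rTr.
have triTr : triangle E r Tr.
  split=> //; split=> //; first by rewrite Tr3.
  move=> D ltDTr; apply: rank_small; first exact: subset_trans (proper_sub ltDTr) sTE.
  by have := proper_card ltDTr; rewrite Tr3.
by move: (xfree _ triTr); rewrite xTr.
Qed.

Lemma in_closure_card x (A : {set T}) : triangle_free x -> x \in E ->
  A \subset E -> x \notin A -> in_closure A x -> 3 <= #|A|.
Proof.
move=> xfree xE sAE xA clAx; rewrite leqNgt; apply/negP => A2.
have sxAE : x |: A \subset E by rewrite subUset sub1set xE sAE.
have cxA : #|x |: A| = #|A| + 1 by rewrite cardsU1 xA addnC.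
have rA := rank_le_card sAE.
have [A2'|A1] := eqVneq #|A| 2.
  have := triangle_free_rank xfree sxAE; rewrite cxA A2' setU11 => /(_ erefl isT).
  move: clAx; rewrite /in_closure; card_lia.
by move: clAx; rewrite /in_closure rank_small // cxA; card_lia.
Qed.

Lemma contract_lambda_singleton z (A : {set T}) : z \in E ->
  A \subset E :\ z -> #|A| = 1 ->
  r E + 2 <= r (z |: A) + r (z |: ((E :\ z) :\: A)).
Proof.
move=> zE sA /eqP/cards1P [s As]; subst A.
move: (sA); rewrite sub1set !inE => /andP [sz sE].
have r2 : r [set z; s] = 2.
  by rewrite rank_small ?cards2 1?eq_sym ?sz // subUset !sub1set zE sE.
rewrite setU1_compl_setD1 // r2.
have sE1 : [set s] \subset E by rewrite sub1set.
have := three_connected_lambda (k := 1) isT sE1; rewrite cards1 rank_set1 //.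
rewrite cardsDS // cards1 => /(_ isT ltac:(card_lia)); card_lia.
Qed.

Lemma contract_separation_rank z k (S : {set T}) : z \in E -> k < 3 ->
  k_separation (E :\ z) (contract_rank r z) k S ->
  [/\ S \subset E :\ z, 2 <= #|S|, 2 <= #|(E :\ z) :\: S| &
      r (z |: S) + r (z |: ((E :\ z) :\: S)) <= r E + 2].
Proof.
move=> zE k3 [sS kS].
rewrite /contract_rank rank_set1 // ![_ :|: [set z]]setUC setD1K //.
set Sc := (E :\ z) :\: S => kSc lt.
have sScS : Sc \subset E :\ z by exact: subsetDl.
have sSE : S \subset E := subset_trans sS (subD1set E z).
have sScE : Sc \subset E := subset_trans sScS (subD1set E z).
have sz1 : [set z] \subset E by rewrite sub1set.
have szS : z |: S \subset E by rewrite subUset sz1 sSE.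
have szSc : z |: Sc \subset E by rewrite subUset sz1 sScE.
have rzS : 1 <= r (z |: S) by rewrite -(rank_set1 zE) rank_mono ?subsetUl.
have rzSc : 1 <= r (z |: Sc) by rewrite -(rank_set1 zE) rank_mono ?subsetUl.
have rE : 1 <= r E by rewrite -(rank_set1 zE) rank_mono.
have lower : 1 + r E <= r (z |: S) + r (z |: Sc).
  have := rank_submod szS szSc.
  have -> : (z |: S) :|: (z |: Sc) = E by rewrite /Sc; move: zE sS; set_eq.
  have -> : (z |: S) :&: (z |: Sc) = [set z] by rewrite /Sc; move: zE sS; set_eq.
  by rewrite rank_set1 //; card_lia.
have [S1|S2] := eqVneq #|S| 1.
  by have := contract_lambda_singleton zE sS S1; rewrite -/Sc; card_lia.
have [Sc1|Sc2] := eqVneq #|Sc| 1.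
  have := contract_lambda_singleton zE sScS Sc1.
  by rewrite /Sc setD_compl // -/Sc; card_lia.
split=> //; card_lia.
Qed.

Lemma three_connected_contract z : z \in E -> triangle_free z ->
  (forall S, ~ vertical_sep z S) -> three_connected (E :\ z) (contract_rank r z).
Proof.
move=> zE zfree noS k S k3 sepS.
have [sS S2 Sc2 sum] := contract_separation_rank zE k3 sepS.
set Sc := (E :\ z) :\: S in Sc2 sum.
have sScS : Sc \subset E :\ z by exact: subsetDl.
have sSE : S \subset E := subset_trans sS (subD1set E z).
have sScE : Sc \subset E := subset_trans sScS (subD1set E z).
have clS := contract_separation_closure zE sS S2 Sc2 sum.
have clSc : in_closure Sc z.
  by apply: contract_separation_closure; rewrite /Sc ?setD_compl // addnC.
have zS : z \notin S by apply/negP => /(subsetP sS); rewrite !inE eqxx.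
have zSc : z \notin Sc by rewrite /Sc !inE eqxx andbF.
have mS : r S <= r (z |: S) by rewrite rank_mono ?subsetUr // subUset sub1set zE.
have mSc : r Sc <= r (z |: Sc) by rewrite rank_mono ?subsetUr // subUset sub1set zE.
apply: (noS S); split=> //; [exact: in_closure_card clS |
  exact: in_closure_card clSc | rewrite -/Sc; card_lia].
Qed.

Lemma vertical_sep_setU1 e (X : {set T}) t : e \in E -> triangle_free e ->
  vertical_sep e X -> t \in (E :\ e) :\: X -> in_closure X t ->
  vertical_sep e (t |: X).
Proof.
move=> eE efree [sX X3 Y3 [clX clY] sum] tY clXt.
set Y := (E :\ e) :\: X in Y3 clY sum tY *.
have sXE : X \subset E := subset_trans sX (subD1set E e).
have sYE : Y \subset E := subset_trans (subsetDl _ _) (subD1set E e).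
have tE : t \in E := subsetP sYE t tY.
have tX : t \notin X by move: tY; rewrite !inE => /andP [].
have stXE : t |: X \subset E by rewrite subUset sub1set tE sXE.
have cY := card_compl_setD1 eE sX; rewrite -/Y in cY.
have cYt : #|Y :\ t| + 1 = #|Y| by rewrite (cardsD1 t Y) tY addnC.
have compl : (E :\ e) :\: (t |: X) = Y :\ t by rewrite /Y; set_eq.
have sYtE : Y :\ t \subset E := subset_trans (subD1set Y t) sYE.
have clYt : in_closure (Y :\ t) e.
  have Yt2 : 2 <= #|Y :\ t| by card_lia.
  have EYt2 : 2 <= #|E :\: (Y :\ t)| by rewrite cardsDS //; card_lia.
  have := three_connected_lambda (k := 2) isT sYtE Yt2 EYt2.
  have -> : E :\: (Y :\ t) = e |: (t |: X) by rewrite /Y; move: eE sX tE; set_eq.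
  have := in_closureS stXE eE (subsetUr _ _) clX.
  have seYE : e |: Y \subset E by rewrite subUset sub1set eE sYE.
  have := rank_mono seYE (setUS [set e] (subD1set Y t)).
  move: clY clXt; rewrite /in_closure; card_lia.
have eYt : e \notin Y :\ t by rewrite /Y !inE eqxx !andbF.
have := in_closure_card efree eE sYtE eYt clYt.
rewrite /vertical_sep compl; split=> //.
- by rewrite subUset sub1set (subsetP (subsetDl _ _) t tY) sX.
- by rewrite cardsU1 tX; card_lia.
- by split=> //; apply: in_closureS clX; rewrite ?subsetUr.
- have := rank_mono sYE (subD1set Y t); move: clXt; rewrite /in_closure; card_lia.
Qed.

Section CocircuitSide.
Variables (Cs : {set T}) (e z : T) (X : {set T}).
Hypotheses (cocircuit_Cs : cocircuit E r Cs) (e_Cs : e \in Cs).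
Hypotheses (sepX : vertical_sep e X) (X_Cs : X :&: Cs = [set z]).

Let Y := (E :\ e) :\: X.

Let e_E : e \in E. Proof. exact: subsetP (cocircuit_sub cocircuit_Cs) e e_Cs. Qed.
Let sX : X \subset E :\ e. Proof. by case: sepX. Qed.
Let sXE : X \subset E. Proof. exact: subset_trans sX (subD1set E e). Qed.
Let sYE : Y \subset E. Proof. exact: subset_trans (subsetDl _ _) (subD1set E e). Qed.
Let z_XCs : z \in X :&: Cs. Proof. by rewrite X_Cs set11. Qed.
Let z_X : z \in X. Proof. by case/setIP: z_XCs. Qed.
Let z_Cs : z \in Cs. Proof. by case/setIP: z_XCs. Qed.
Let z_E : z \in E. Proof. exact: subsetP sXE z z_X. Qed.
Let z_e : z != e. Proof. by have := subsetP sX z z_X; rewrite !inE => /andP []. Qed.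
Let cXY : #|X| + #|Y| + 1 = #|E|. Proof. exact: card_compl_setD1 e_E sX. Qed.
Let cX' : #|X :\ z| + 1 = #|X|. Proof. by rewrite (cardsD1 z X) z_X addnC. Qed.

Let side_Cs x : x \in X -> x \in Cs -> x = z.
Proof. by move=> xX xCs; apply/set1P; rewrite -X_Cs inE xX. Qed.

Let sX'H : X :\ z \subset E :\: Cs.
Proof.
apply/subsetP => x /setD1P [xz xX]; rewrite inE (subsetP sXE x xX) andbT.
by apply: contra xz => xCs; rewrite (side_Cs xX xCs).
Qed.

Let sX'E : X :\ z \subset E. Proof. exact: subset_trans sX'H (subsetDl E Cs). Qed.
Let sX'z : X :\ z \subset E :\ z. Proof. exact: setSD. Qed.
Let e_X : e \notin X. Proof. by apply/negP => /(subsetP sX); rewrite !inE eqxx. Qed.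

Lemma rank_side_setD1 : r (X :\ z) < r X.
Proof.
rewrite ltnNge; apply/negP => rX'.
apply: (cocircuit_not_in_closure cocircuit_Cs sX'H e_Cs).
have [_ _ _ [clX _] _] := sepX.
have seXE : e |: X \subset E by rewrite subUset sub1set e_E sXE.
have := rank_mono seXE (setUS [set e] (subD1set X z)).
move: clX; rewrite /in_closure; card_lia.
Qed.

Lemma other_side_not_in_closure (A : {set T}) : A \subset e |: Y ->
  ~ in_closure A z.
Proof.
move=> sA clAz; have [_ X3 Y3 [_ clY] sum] := sepX; rewrite -/Y in Y3 clY sum.
have seYE : e |: Y \subset E by rewrite subUset sub1set e_E sYE.
have := in_closureS seYE z_E sA clAz.
have X'2 : 2 <= #|X :\ z| by card_lia.
have EX'2 : 2 <= #|E :\: (X :\ z)| by rewrite cardsDS //; card_lia.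
have := three_connected_lambda (k := 2) isT sX'E X'2 EX'2.
have -> : E :\: (X :\ z) = z |: (e |: Y) by rewrite /Y; move: e_E sX z_X; set_eq.
have := rank_side_setD1; move: clY; rewrite /in_closure; card_lia.
Qed.

(* Cross (S, Sc) with (X - z, e + Y) both ways: as |e + Y| >= 4, the only way
   to avoid two large opposite corners is that S meets X - z once. *)
Lemma vertical_sep_meets_side (S : {set T}) :
  vertical_sep z S -> #|S :&: (X :\ z)| = 1.
Proof.
move=> sepS; have sepSc := vertical_sepC sepS.
have [sS S3 Sc3 [clS clSc] sumS] := sepS.
set Sc := (E :\ z) :\: S in sepSc Sc3 clSc sumS *.
have [_ X3 Y3 [_ clY] sumX] := sepX; rewrite -/Y in Y3 clY sumX.
set X' := X :\ z; set W := (E :\ z) :\: X'.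
have sWz : W \subset E :\ z by exact: subsetDl.
have sScz : Sc \subset E :\ z by exact: subsetDl.
have W_eq : W = e |: Y by rewrite /W /X' /Y; move: e_E sX z_X z_e; set_eq.
have cW : #|W| = #|Y| + 1.
  by rewrite W_eq cardsU1 /Y !inE eqxx andbF addnC.
have seYE : e |: Y \subset E by rewrite subUset sub1set e_E sYE.
have sumXW : r (z |: X') + r (z |: W) <= r E + 3.
  rewrite W_eq /X' setD1K //; have := rank_setU1 seYE z_E.
  move: clY; rewrite /in_closure; card_lia.
have sumSSc : r (z |: S) + r (z |: Sc) <= r E + 2.
  by move: clS clSc sumS; rewrite /in_closure; card_lia.
have sumScS : r (z |: Sc) + r (z |: ((E :\ z) :\: Sc)) <= r E + 2.
  by rewrite /Sc setD_compl // -/Sc addnC.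
have nclX' (A : {set T}) : A \subset X' -> ~ in_closure A z.
  move=> sA; apply: (cocircuit_not_in_closure cocircuit_Cs _ z_Cs).
  exact: subset_trans sA sX'H.
have nclW (A : {set T}) : A \subset W -> ~ in_closure A z.
  by rewrite W_eq; exact: other_side_not_in_closure.
have cross1 := crossing_separations z_E sS sX'z sumSSc sumXW
  (nclX' _ (subsetIr _ _)) (nclW _ (subsetIr _ _)).
have cross2 := crossing_separations z_E sScz sX'z sumScS sumXW
  (nclX' _ (subsetIr _ _)) (nclW _ (subsetIr _ _)).
rewrite /Sc setD_compl // -/Sc in cross2.
have cS := card_setI_compl X' sS; rewrite -/W in cS.
have cSc := card_setI_compl X' sScz; rewrite -/W in cSc.
have cX'S : #|S :&: X'| + #|Sc :&: X'| = #|X'|.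
  by rewrite setIC [Sc :&: _]setIC card_setI_compl.
have cWS : #|S :&: W| + #|Sc :&: W| = #|W|.
  by rewrite setIC [Sc :&: _]setIC card_setI_compl.
have cX'3 : 2 <= #|X'| by rewrite /X'; card_lia.
move: cross1 cross2; rewrite -/Sc -/W -/X'; card_lia.
Qed.

(* With X = {z, s, t}: the triangle-free e makes {z, e, t} independent inside
   e + X, whose rank is at most 3, so {z, e, t} spans s. *)
Lemma vertical_sep_side_in_closure (S : {set T}) s : triangle_free e ->
  vertical_sep z S -> e \notin S -> S :&: (X :\ z) = [set s] ->
  in_closure (z |: ((E :\ z) :\: S)) s.
Proof.
move=> efree sepS eS Ss; have [sS _ _ _ _] := sepS.
have /eqP/cards1P [t Sct] := vertical_sep_meets_side (vertical_sepC sepS).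
have /setIP [_ /setD1P [_ sX1]] : s \in S :&: (X :\ z) by rewrite Ss set11.
have /setIP [tSc /setD1P [tz tX]] : t \in ((E :\ z) :\: S) :&: (X :\ z).
  by rewrite Sct set11.
have X3 : #|X| = 3.
  have := card_setI_compl S sX'z; rewrite setIC Ss setIC Sct !cards1.
  by move: cX'; card_lia.
have te : t != e by apply: contraNneq e_X => <-.
have eSc : e \in (E :\ z) :\: S by rewrite !inE eS eq_sym z_e e_E.
set Tr := z |: [set e; t].
have sTrE : Tr \subset E by rewrite !subUset !sub1set z_E e_E (subsetP sXE t tX).
have cTr : #|Tr| = 3.
  by rewrite /Tr cardsU1 cards2 !inE negb_or z_e (eq_sym z t) tz (eq_sym e t) te.
have eTr : e \in Tr by rewrite !inE eqxx orbT.
have rTr := triangle_free_rank efree sTrE cTr eTr.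
have seXE : e |: X \subset E by rewrite subUset sub1set e_E sXE.
have sTrX : s |: Tr \subset e |: X.
  by rewrite !subUset !sub1set !inE sX1 z_X tX !eqxx !orbT.
have [_ _ _ [clX _] _] := sepX.
have clTr : in_closure Tr s.
  have := rank_mono seXE sTrX; have := rank_le_card sXE.
  move: clX; rewrite /in_closure X3; card_lia.
have sScE : z |: ((E :\ z) :\: S) \subset E.
  by rewrite subUset sub1set z_E (subset_trans (subsetDl _ _) (subD1set E z)).
apply: in_closureS sScE (subsetP sXE s sX1) _ clTr.
by rewrite /Tr !subUset !sub1set !in_setU1 eqxx eSc tSc !orbT.
Qed.

(* Otherwise S - s lies in e + Y, so it does not span z, while s is spanned by
   z + Sc; then lambda (S - s) >= 2 exceeds the rank budget of (S, Sc). *)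
Lemma mem_vertical_sep_contract (S : {set T}) : triangle_free e ->
  vertical_sep z S -> e \in S.
Proof.
move=> efree sepS; apply: contraT => eS.
have [sS S3 _ [clS clSc] sumS] := sepS.
have /eqP/cards1P [s Ss] := vertical_sep_meets_side sepS.
have clSs := vertical_sep_side_in_closure efree sepS eS Ss.
have /setIP [sS1 _] : s \in S :&: (X :\ z) by rewrite Ss set11.
set Sc := (E :\ z) :\: S in clSc clSs sumS.
set A := S :\ s.
have sAY : A \subset e |: Y.
  apply/subsetP => x /setD1P [xs xS].
  have xX' : x \notin X :\ z.
    by apply: contra xs => xX'; rewrite -in_set1 -Ss inE xS.
  by move: xX' (subsetP sS x xS) eS; rewrite /Y !inE; bool_cases.
have sSE : S \subset E := subset_trans sS (subD1set E z).
have sAE : A \subset E := subset_trans (subD1set S s) sSE.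
have cA : #|A| + 1 = #|S| by rewrite (cardsD1 s S) sS1 addnC.
have A2 : 2 <= #|A| by card_lia.
have EA2 : 2 <= #|E :\: A|.
  by rewrite cardsDS //; have := card_compl_setD1 z_E sS; card_lia.
have := three_connected_lambda (k := 2) isT sAE A2 EA2.
have -> : E :\: A = s |: (z |: Sc) by rewrite /A /Sc; move: sS sS1 z_E; set_eq.
have := other_side_not_in_closure sAY.
have szSE : z |: S \subset E by rewrite subUset sub1set z_E sSE.
have := rank_mono szSE (setUS [set z] (subD1set S s)).
move: clS clSc clSs; rewrite -/A /in_closure; card_lia.
Qed.

Lemma no_vertical_sep_contract (S : {set T}) : triangle_free e ->
  ~ vertical_sep z S.
Proof.
move=> efree sepS; have eS := mem_vertical_sep_contract efree sepS.
by have := mem_vertical_sep_contract efree (vertical_sepC sepS); rewrite !inE eS.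
Qed.

Lemma three_connected_contract_side : triangle_free e -> triangle_free z ->
  three_connected (E :\ z) (contract_rank r z).
Proof.
move=> efree zfree; apply: three_connected_contract z_E zfree _ => S.
exact: no_vertical_sep_contract.
Qed.

Lemma triangle_exchange (Tr : {set T}) : triangle_free e ->
  triangle E r Tr -> z \in Tr ->
  exists t, [/\ t \in Cs, t \in Tr, t \in Y & in_closure X t].
Proof.
move=> efree triTr zTr; have [[sTrE rTr _] Tr3] := triTr.
have clTr := triangle_in_closure triTr zTr.
have /subsetPn [t /setD1P [tz tTr] tH] : ~~ (Tr :\ z \subset E :\: Cs).
  by apply/negP => sH; exact: (cocircuit_not_in_closure cocircuit_Cs sH z_Cs clTr).
have /subsetPn [w /setD1P [wz wTr] wY] : ~~ (Tr :\ z \subset e |: Y).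
  by apply/negP => sW; exact: other_side_not_in_closure sW clTr.
have [tE wE] := (subsetP sTrE t tTr, subsetP sTrE w wTr).
have tCs : t \in Cs by move: tH; rewrite !inE tE andbT negbK.
have tX : t \notin X by apply: contra tz => tX; rewrite (side_Cs tX tCs).
have te : t != e by apply: contraTneq tTr => ->; exact: efree.
have we : w != e by apply: contraTneq wTr => ->; exact: efree.
have wX : w \in X by move: wY; rewrite /Y !inE wE (negbTE we) /= !andbT negbK.
exists t; split=> //; first by rewrite /Y !inE tX te tE.
have szwX : [set z; w] \subset X by rewrite subUset !sub1set z_X wX.
have szwE : [set z; w] \subset E := subset_trans szwX sXE.
apply: in_closureS sXE tE szwX _.
rewrite /in_closure (rank_small szwE) ?cards2 1?eq_sym ?wz //.
have stzwTr : t |: [set z; w] \subset Tr by rewrite !subUset !sub1set tTr zTr wTr.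
by have := rank_mono sTrE stzwTr; move: rTr; rewrite Tr3; card_lia.
Qed.

Lemma vertical_sep_exchange (Tr : {set T}) c : #|Cs| = 4 ->
  triangle_free e -> triangle E r Tr -> z \in Tr ->
  c \in Cs -> c != e -> triangle_free c ->
  exists X2, vertical_sep e X2 /\ X2 :&: Cs = [set c].
Proof.
move=> Cs4 efree triTr zTr cCs ce cfree.
have [t [tCs tTr tY clXt]] := triangle_exchange efree triTr zTr.
have sep2 := vertical_sepC (vertical_sep_setU1 e_E efree sepX tY clXt).
have compl : (E :\ e) :\: (t |: X) = Y :\ t by rewrite /Y; set_eq.
rewrite compl in sep2; exists (Y :\ t); split=> //.
have tz : t != z by apply: contraTneq tY => ->; rewrite /Y !inE z_X.
have te : t != e by apply: contraTneq tY => ->; rewrite /Y !inE eqxx /= andbF.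
have ct : c != t by apply: contraTneq tTr => <-; exact: cfree.
have cz : c != z by apply: contraTneq zTr => <-; exact: cfree.
have cX : c \notin X by apply: contra cz => cX; rewrite (side_Cs cX cCs).
have Crest1 : #|Cs :\ e :\ z :\ t| == 1.
  move: Cs4; rewrite (cardsD1 e) e_Cs (cardsD1 z) !inE z_e z_Cs.
  by rewrite (cardsD1 t) !inE tz (negbTE te) tCs; card_lia.
have /cards1P [k K] := Crest1.
have memK x : x \in Cs -> x != e -> x != z -> x != t -> x = k.
  by move=> xCs xe xz xt; apply/set1P; rewrite -K !inE xt xz xe.
have cY : c \in Y.
  by rewrite /Y !inE cX ce (subsetP (cocircuit_sub cocircuit_Cs) c cCs).
apply/eqP; rewrite eqEsubset sub1set in_setI in_setD1 ct cY cCs /= andbT.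
apply/subsetP => x /setIP [/setD1P [xt xY] xCs].
have [xX xe] : x \notin X /\ x != e by move: xY; rewrite /Y !inE => /and3P [].
have xz : x != z by apply: contraNneq xX => ->.
by rewrite inE (memK x xCs xe xz xt) (memK c cCs ce cz ct).
Qed.

End CocircuitSide.

End ThreeConnected.
End Matroid.

Theorem lemma4p5 (T : finType) (E : {set T}) (r : {set T} -> nat)
  (HM : is_matroid E r) (H3 : three_connected E r)
  (Cs : {set T}) (HC : cocircuit E r Cs) (H4 : #|Cs| = 4)
  (c' c'' : T) (Hc' : c' \in Cs) (Hc'' : c'' \in Cs) (Hne : c' != c'')
  (Ht' : forall Tr : {set T}, triangle E r Tr -> c' \notin Tr)
  (Ht'' : forall Tr : {set T}, triangle E r Tr -> c'' \notin Tr) :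
  exists c, c \in Cs /\
    three_connected (contract_ground E c) (contract_rank r c).
Proof.
rewrite /contract_ground; have sCE := cocircuit_sub HC.
have card_E : 4 <= #|E| by rewrite -H4 subset_leq_card.
have [noS|] := classic (forall S, ~ vertical_sep E r c' S).
  exists c'; split=> //.
  exact: (three_connected_contract HM H3 card_E (subsetP sCE c' Hc') Ht' noS).
move=> /not_all_not_ex [S sepS].
have [X [z [sepX X_Cs]]] := vertical_sep_cocircuit_side HM HC H4 Hc' sepS.
have /setIP [_ zCs] : z \in X :&: Cs by rewrite X_Cs set11.
have [zfree|/not_triangle_free [Tr triTr zTr]] := classic (triangle_free E r z).
  exists z; split=> //.
  exact: (three_connected_contract_side HM H3 card_E HC Hc' sepX X_Cs Ht' zfree).
have Hne' : c'' != c' by rewrite eq_sym.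
have [X2 [sepX2 X2_Cs]] := vertical_sep_exchange HM H3 card_E HC Hc' sepX X_Cs
  H4 Ht' triTr zTr Hc'' Hne' Ht''.
exists c''; split=> //.
exact: (three_connected_contract_side HM H3 card_E HC Hc' sepX2 X2_Cs Ht' Ht'').
Qed.
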